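(* Let $\lambda=(\lambda_1,\ldots,\lambda_\ell)$ be a partition with $\ell$ positive parts, and let $\mu=(\lambda_a,\lambda_{a+1},\ldots,\lambda_b)$ for some $1\leq a\leq b\leq\ell$ (a consecutive subpartition), having $m=b-a+1$ parts. Suppose $n\geq\ell$. Then the poset $\mathcal B_\mu^{n-\ell+m}$ is isomorphic to an interval in the poset $\mathcal B_\lambda^n$. In particular, if $\mathcal B_\mu^{n-\ell+m}$ is not a lattice, then $\mathcal B_\lambda^n$ is not a lattice.
   Context: For $N\geq 1$ and a partition $\nu$ with at most $N$ positive parts, $\mathcal B_\nu^N$ is the set of semistandard Young tableaux of shape $\nu$ (rows weakly increasing, columns strictly increasing) with entries in $\{1,\ldots,N+1\}$, partially ordered by the reflexive transitive closure of $T<F_i(T)$ for $i\in\{1,\ldots,N\}$ with $F_i(T)\neq 0$. Here $F_i$ is the type A crystal lowering operator: in the reading word of $T$ (rows read from bottom to top, each row left to right) keep only letters $i$ and $i+1$, replace each $i$ by '')'' and each $i+1$ by ''('', and match parentheses in the usual way; if there is no unmatched '')'', $F_i(T)=0$; otherwise $F_i(T)$ is obtained by changing the entry $i$ corresponding to the rightmost unmatched '')'' into $i+1$. *)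

From Stdlib Require Import Relations.
From mathcomp Require Import all_boot.
Set Implicit Arguments. Unset Strict Implicit. Unset Printing Implicit Defensive.

Definition is_partition (nu : seq nat) : bool :=
  sorted geq nu && all (fun x => 0 < x) nu.

(* A tableau is a list of rows (row 1 first), each row a list of entries. *)
Definition tableau := seq (seq nat).

Definition is_ssyt (N : nat) (nu : seq nat) (T : tableau) : Prop :=
  [/\ map size T = nu,
      (forall r, r < size T -> sorted leq (nth [::] T r)),
      (forall r c, r.+1 < size T -> c < size (nth [::] T r.+1) ->
          nth 0 (nth [::] T r) c < nth 0 (nth [::] T r.+1) c)
    & (forall r, r < size T -> all (fun x => 0 < x <= N.+1) (nth [::] T r))].

Definition B (nu : seq nat) (N : nat) (T : tableau) : Prop := is_ssyt N nu T.

Definition reading_word (T : tableau) : seq nat := flatten (rev T).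

(* Bracket scan: i is ")" and i+1 is "(".  Returns the position of the
   rightmost unmatched ")" (if any).  [opn] counts unmatched "(" so far. *)
Fixpoint scan (i : nat) (w : seq nat) (pos opn : nat) (last : option nat)
  : option nat :=
  match w with
  | [::] => last
  | x :: w' =>
      if x == i.+1 then scan i w' pos.+1 opn.+1 last
      else if x == i then
        (if 0 < opn then scan i w' pos.+1 opn.-1 last
         else scan i w' pos.+1 opn (Some pos))
      else scan i w' pos.+1 opn last
  end.

(* Crystal lowering operator on words; None plays the role of 0. *)
Definition Fword (i : nat) (w : seq nat) : option (seq nat) :=
  match scan i w 0 0 None with
  | None => None
  | Some p => Some (set_nth 0 w p i.+1)
  end.

(* Crystal lowering operator on tableaux: modify the reading word and put
   the letters back into the same cells. *)
Definition Fop (i : nat) (T : tableau) : option tableau :=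
  match Fword i (reading_word T) with
  | None => None
  | Some w => Some (rev (reshape (rev (map size T)) w))
  end.

Definition step (N : nat) (T T' : tableau) : Prop :=
  exists2 i, 0 < i <= N & Fop i T = Some T'.

Definition Ble (N : nat) : relation tableau := clos_refl_trans tableau (step N).

Definition is_lattice (P : tableau -> Prop) (le : relation tableau) : Prop :=
  forall x y, P x -> P y ->
    (exists z, [/\ P z, le x z, le y z &
                  forall u, P u -> le x u -> le y u -> le z u]) /\
    (exists z, [/\ P z, le z x, le z y &
                  forall u, P u -> le u x -> le u y -> le u z]).

(* Put d := a - 1 and N := n - l + m.  A tableau X of B_mu^N is sent to the
   tableau of shape lambda whose first d rows are frozen (row r filled with r),
   whose rows a, ..., b are X with every entry raised by d, and whose last
   l - b rows are frozen at the largest values a column of height l allows.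
   The frozen letters are all <= d or > N + d + 1, so they never take part in
   the bracketing of the letters j + d and j + d + 1: the map intertwines F_j
   with F_(j+d) for 1 <= j <= N and is an order embedding.  B_mu^N has a least
   and a greatest element, since a tableau on which no F_i (resp. no inverse
   of an F_i) acts is the greatest (resp. least) one.  Every F_i raises one
   letter of the reading word, so a tableau lying between the images of these
   two elements agrees with them on the frozen rows and is itself an image.
   Finally, an interval of a lattice is a lattice. *)

From Stdlib Require Import Relations.
From mathcomp Require Import all_boot zify.
Set Implicit Arguments. Unset Strict Implicit. Unset Printing Implicit Defensive.

(** * Bracketing *)

Section Brackets.

Variable i : nat.
Implicit Types u v w : seq nat.

(* The letter i.+1 is an opening and the letter i a closing bracket: [nopen w o]
   is the number of unmatched openings after reading [w] with [o] of them
   pending, and [matched w o] says that every closing bracket of [w] is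
   matched. *)

Fixpoint nopen (w : seq nat) (o : nat) : nat :=
  match w with
  | [::] => o
  | x :: w' => nopen w' (if x == i.+1 then o.+1 else if x == i then o.-1 else o)
  end.

Fixpoint matched (w : seq nat) (o : nat) : bool :=
  match w with
  | [::] => true
  | x :: w' => if x == i.+1 then matched w' o.+1
               else if x == i then (0 < o) && matched w' o.-1
               else matched w' o
  end.

Lemma nopen_cat u v o : nopen (u ++ v) o = nopen v (nopen u o).
Proof. by elim: u o => //= x u IH o. Qed.

Lemma matched_cat u v o : matched (u ++ v) o = matched u o && matched v (nopen u o).
Proof.
elim: u o => //= x u IH o.
case: ifP => _; first exact: IH.
by case: ifP => _; rewrite IH // andbA.
Qed.

Lemma scan_default w pos o last :
  scan i w pos o last = if scan i w pos o None is Some q then Some q else last.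
Proof.
elim: w pos o last => //= x w IH pos o last.
case: ifP => _; first exact: IH.
case: ifP => _; last exact: IH.
case: ifP => _; first exact: IH.
by rewrite IH; case: (scan i w pos.+1 o None).
Qed.

Lemma scan_NoneE w pos o : (scan i w pos o None == None) = matched w o.
Proof.
elim: w pos o => //= x w IH pos o.
case: ifP => _; first exact: IH.
case: ifP => _; last exact: IH.
case: ifP => /= _; first exact: IH.
by rewrite scan_default; case: (scan _ _ _ _ None).
Qed.

Lemma scan_SomeP w pos o p : scan i w pos o None = Some p ->
  exists u v, [/\ w = u ++ i :: v, p = pos + size u, nopen u o = 0 & matched v 0].
Proof.
elim: w pos o p => //= x w IH pos o p.
case: ifP => x_open.
  by move=> /IH [u [v [-> -> nopen_u matched_v]]]; exists (x :: u), v; rewrite /= x_open addSnnS.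
case: ifP => [/eqP x_close | x_other]; last first.
  move=> /IH [u [v [-> -> nopen_u matched_v]]]; exists (x :: u), v.
  by rewrite /= x_open x_other addSnnS.
case: ifP => o_pos.
  move=> /IH [u [v [-> -> nopen_u matched_v]]]; exists (x :: u), v.
  by rewrite /= x_open x_close eqxx addSnnS.
have {o_pos} -> : o = 0 by move: o_pos; case: o.
rewrite scan_default; case E: (scan i w pos.+1 0 None) => [q|] [<-].
  move: E => /IH [u [v [-> -> nopen_u matched_v]]]; exists (x :: u), v.
  by split; rewrite //= ?addSnnS // x_open x_close eqxx.
exists [::], w; rewrite x_close addn0; split => //.
by rewrite -(scan_NoneE _ pos.+1) E.
Qed.

Lemma scan_unmatched u v pos o : nopen u o = 0 -> matched v 0 ->
  scan i (u ++ i :: v) pos o None = Some (pos + size u).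
Proof.
elim: u pos o => [|x u IH] pos o /=.
  move=> -> matched_v; rewrite (ltn_eqF (ltnSn i)) eqxx /= scan_default addn0.
  by move: matched_v; rewrite -(scan_NoneE _ pos.+1) => /eqP ->.
case: ifP => _; first by move=> nopen_u matched_v; rewrite IH // addSnnS.
case: ifP => _; last by move=> nopen_u matched_v; rewrite IH // addSnnS.
case: ifP => o_pos nopen_u matched_v; first by rewrite IH // addSnnS.
by rewrite scan_default IH ?addSnnS //; move: o_pos nopen_u; case: o.
Qed.

Definition avoids (x : nat) := (x != i) && (x != i.+1).

Lemma nopen_avoid u o : all avoids u -> nopen u o = o.
Proof. by elim: u => //= x u IH /andP [/andP [/negbTE -> /negbTE ->] /IH]. Qed.

Lemma matched_avoid u o : all avoids u -> matched u o.
Proof. by elim: u => //= x u IH /andP [/andP [/negbTE -> /negbTE ->] /IH]. Qed.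

Lemma nopen_no_close w o : {in w, forall x, x != i} -> nopen w o = o + count_mem i.+1 w.
Proof.
elim: w o => [|x w IH] o /= w_noi; first by rewrite addn0.
rewrite (negbTE (w_noi x (mem_head _ _))) IH => [|y y_w]; last first.
  by apply: w_noi; rewrite inE y_w orbT.
by case: ifP => _; rewrite ?addSnnS ?addn0.
Qed.

Lemma nopen_ge w o : o - count_mem i w <= nopen w o.
Proof.
elim: w o => [|x w IH] o /=; first by rewrite subn0.
case: ifP => /eqP x_open.
  by rewrite x_open (gtn_eqF (ltnSn i)) add0n; exact: leq_trans (leq_sub2r _ (leqnSn o)) (IH o.+1).
case: ifP => _; last exact: IH.
by rewrite add1n subnS -subn1 subnAC subn1; exact: IH.
Qed.

Lemma nopen_monotone w : {homo nopen w : o o' / o <= o'}.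
Proof.
elim: w => //= x w IH o o' le_oo'; apply: IH.
by case: ifP => _ //; case: ifP => _ //; rewrite -!subn1 leq_sub2r.
Qed.

Lemma count_open_le_nopen w o : sorted leq w -> count_mem i.+1 w <= nopen w o.
Proof.
elim: w o => //= x w IH o w_sorted.
case: ifP => /eqP x_open; last by rewrite add0n; case: ifP => _; exact/IH/(path_sorted w_sorted).
rewrite nopen_no_close ?add1n ?ltnS ?leq_addl // => y /(allP (order_path_min leq_trans w_sorted)).
by rewrite x_open /=; lia.
Qed.

Lemma matched_prefix u v o : matched (u ++ v) o ->
  count_mem i u <= o + count_mem i.+1 u.
Proof.
elim: u o => [|x u IH] o //=.
case: ifP => /eqP x_open.
  by rewrite x_open (gtn_eqF (ltnSn i)) /= add0n addnA addn1 => /IH.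
case: ifP => /eqP x_close /=; last by rewrite !add0n => /IH.
by case/andP; case: o => // o _ /IH; rewrite add0n add1n addSn ltnS.
Qed.

Lemma sorted_unmatched w o : sorted leq w -> o < count_mem i w -> ~~ matched w o.
Proof.
elim: w o => //= x w IH o w_sorted.
have x_min := allP (order_path_min leq_trans w_sorted).
case: ifP => /eqP x_open.
  rewrite x_open (gtn_eqF (ltnSn i)) (eq_in_count (a2 := pred0)) ?count_pred0 //.
  by move=> y /x_min /=; rewrite x_open; lia.
case: ifP => /eqP x_close; last by rewrite add0n; exact/IH/(path_sorted w_sorted).
by rewrite add1n ltnS; case: o => //= o; exact/IH/(path_sorted w_sorted).
Qed.

Lemma nopen_pos_split w o : 0 < nopen w o ->
  (0 < o /\ matched w o.-1) \/
  exists u v, [/\ w = u ++ i.+1 :: v, nopen u o = 0 & matched v 0].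
Proof.
elim: w o => [|x w IH] o /=; first by left.
case: ifP => x_open.
  move=> /IH [[_ matched_w]|[u [v [-> nopen_u matched_v]]]].
    by case: o matched_w => [|o] matched_w; [right; exists [::], w; rewrite (eqP x_open) | left].
  by right; exists (x :: u), v; rewrite /= x_open.
case: ifP => x_close; move=> /IH [[o_pos matched_w]|[u [v [-> nopen_u matched_v]]]].
- by left; split; [lia | rewrite matched_w andbT; lia].
- by right; exists (x :: u), v; rewrite /= x_open x_close.
- by left.
- by right; exists (x :: u), v; rewrite /= x_open x_close.
Qed.

End Brackets.

Lemma nopen_shift i d w o : nopen (i + d) (map (addn^~ d) w) o = nopen i w o.
Proof. by elim: w o => //= x w IH o; rewrite -addSn !eqn_add2r IH. Qed.

Lemma matched_shift i d w o : matched (i + d) (map (addn^~ d) w) o = matched i w o.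
Proof. by elim: w o => //= x w IH o; rewrite -addSn !eqn_add2r !IH. Qed.

(** * Reading words and the operators F_i *)

Lemma cat_cons_split (T : Type) (s t u v : seq T) (x : T) : s ++ t = u ++ x :: v ->
  (exists s1 s2, [/\ s = s1 ++ x :: s2, u = s1 & v = s2 ++ t]) \/
  (exists t1, u = s ++ t1 /\ t = t1 ++ x :: v).
Proof.
elim: s u => [|z s IH] u /=; first by move=> ->; right; exists u.
case: u => [|z' u] /=; first by move=> [-> <-]; left; exists [::], s.
move=> [-> /IH [[s1 [s2 [-> -> ->]]]|[t1 [-> ->]]]].
  by left; exists (z' :: s1), s2.
by right; exists t1.
Qed.

Lemma flatten_cons_split (T : Type) (ss : seq (seq T)) u x v : flatten ss = u ++ x :: v ->
  exists ss1 s1 s2 ss2, [/\ ss = ss1 ++ (s1 ++ x :: s2) :: ss2, u = flatten ss1 ++ s1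
                          & v = s2 ++ flatten ss2].
Proof.
elim: ss u => [|s ss IH] u /=; first by case: u.
move=> eq_su; case: (cat_cons_split eq_su) => [[s1 [s2 [-> -> ->]]] | [t1 [-> eq_t]]].
  by exists [::], s1, s2, ss.
have [ss1 [s1 [s2 [ss2 [-> -> ->]]]]] := IH _ eq_t.
by exists (s :: ss1), s1, s2, ss2; rewrite /= catA.
Qed.

Lemma reading_word_cat (A B : tableau) :
  reading_word (A ++ B) = reading_word B ++ reading_word A.
Proof. by rewrite /reading_word rev_cat flatten_cat. Qed.

Lemma reading_word_cons r (A : tableau) : reading_word (r :: A) = reading_word A ++ r.
Proof. by rewrite /reading_word rev_cons flatten_rcons. Qed.

Lemma reading_word_rcons (A : tableau) r : reading_word (rcons A r) = r ++ reading_word A.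
Proof. by rewrite /reading_word rev_rcons. Qed.

Lemma reading_word_mid (A B : tableau) r :
  reading_word (A ++ r :: B) = reading_word B ++ r ++ reading_word A.
Proof. by rewrite reading_word_cat reading_word_cons catA. Qed.

Lemma reading_word_cell (A B : tableau) L x R :
  reading_word (A ++ (L ++ x :: R) :: B) = (reading_word B ++ L) ++ x :: R ++ reading_word A.
Proof. by rewrite reading_word_mid -!catA. Qed.

Lemma reading_wordP (A : tableau) x :
  reflect (exists2 r, r \in A & x \in r) (x \in reading_word A).
Proof.
apply: (iffP flattenP) => [] [r]; first by rewrite mem_rev; exists r.
by exists r; rewrite ?mem_rev.
Qed.

Lemma all_reading_word (P : pred nat) (A : tableau) :
  all P (reading_word A) = all (all P) A.
Proof.
apply/allP/allP => [PA r r_A | PA x /reading_wordP [r r_A x_r]].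
  by apply/allP => x x_r; apply: PA; apply/reading_wordP; exists r.
exact: (allP (PA r r_A)).
Qed.

Lemma count_reading_word (p : pred nat) (X : tableau) :
  count p (reading_word X) = count p (flatten X).
Proof. by rewrite /reading_word !count_flatten map_rev sumn_rev. Qed.

Lemma size_reading_word (A : tableau) : size (reading_word A) = sumn (map size A).
Proof. by rewrite /reading_word size_flatten /shape map_rev sumn_rev. Qed.

Lemma reading_word_map (f : nat -> nat) (X : tableau) :
  reading_word (map (map f) X) = map f (reading_word X).
Proof. by rewrite /reading_word -map_rev map_flatten. Qed.

Lemma reading_wordK (A : tableau) :
  rev (reshape (rev (map size A)) (reading_word A)) = A.
Proof. by rewrite /reading_word -map_rev flattenK revK. Qed.

Lemma reading_word_inj (A B : tableau) : map size A = map size B ->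
  reading_word A = reading_word B -> A = B.
Proof.
by move=> eq_shape eq_word; rewrite -(reading_wordK A) -(reading_wordK B) eq_shape eq_word.
Qed.

Lemma reading_word_split (T : tableau) u x v : reading_word T = u ++ x :: v ->
  exists A L R B, [/\ T = A ++ (L ++ x :: R) :: B, u = reading_word B ++ L
                    & v = R ++ reading_word A].
Proof.
rewrite /reading_word => word.
have [Y1 [L [R [Y2 [revT -> ->]]]]] := flatten_cons_split word.
exists (rev Y2), L, R, (rev Y1); rewrite /reading_word !revK; split => //.
by rewrite -(revK T) revT rev_cat rev_cons cat_rcons.
Qed.

Lemma set_nth_cat_cons (u v : seq nat) x y : set_nth 0 (u ++ x :: v) (size u) y = u ++ y :: v.
Proof. by elim: u => //= z u ->. Qed.

Lemma Fop_NoneE i T : Fop i T = None <-> matched i (reading_word T) 0.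
Proof. by rewrite /Fop /Fword -(scan_NoneE _ _ 0); case: (scan _ _ _ _ _). Qed.

Lemma Fop_at i (A B : tableau) L R :
  nopen i (reading_word B ++ L) 0 = 0 -> matched i (R ++ reading_word A) 0 ->
  Fop i (A ++ (L ++ i :: R) :: B) = Some (A ++ (L ++ i.+1 :: R) :: B).
Proof.
move=> nopen_u matched_v; rewrite /Fop /Fword.
rewrite reading_word_cell scan_unmatched // add0n set_nth_cat_cons -reading_word_cell.
suff -> : map size (A ++ (L ++ i :: R) :: B) = map size (A ++ (L ++ i.+1 :: R) :: B).
  by rewrite reading_wordK.
by rewrite !map_cat /= !size_cat.
Qed.

Lemma Fop_SomeP i T T' : Fop i T = Some T' ->
  exists A L R B, [/\ T = A ++ (L ++ i :: R) :: B, T' = A ++ (L ++ i.+1 :: R) :: B,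
    nopen i (reading_word B ++ L) 0 = 0 & matched i (R ++ reading_word A) 0].
Proof.
move=> FT; move: (FT); rewrite /Fop /Fword; case E: (scan _ _ _ _ _) => [p|] // _.
have [u [v [word_T _ nopen_u matched_v]]] := scan_SomeP E.
have [A [L [R [B [eq_T eq_u eq_v]]]]] := reading_word_split word_T; subst T u v.
exists A, L, R, B; split => //.
by move: FT; rewrite Fop_at // => -[].
Qed.

Lemma Fop_shape i T T' : Fop i T = Some T' -> map size T' = map size T.
Proof. by case/Fop_SomeP=> [A [L [R [B [-> -> _ _]]]]]; rewrite !map_cat /= !size_cat. Qed.

Lemma sumn_Fop i T T' : Fop i T = Some T' ->
  sumn (reading_word T') = (sumn (reading_word T)).+1.
Proof.
case/Fop_SomeP=> [A [L [R [B [-> -> _ _]]]]].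
by rewrite !reading_word_mid !sumn_cat /=; lia.
Qed.

(** * Semistandard tableaux *)

Definition column_strict (u w : seq nat) : bool :=
  all (fun c => nth 0 u c < nth 0 w c) (iota 0 (size w)).

Definition ssyt N (T : tableau) : bool :=
  [&& all (sorted leq) T, sorted column_strict T
    & all (fun x => 0 < x <= N.+1) (reading_word T)].

Lemma column_strictP u w :
  reflect (forall c, c < size w -> nth 0 u c < nth 0 w c) (column_strict u w).
Proof.
apply: (iffP allP) => col c; last by rewrite mem_iota => /andP [_]; exact: col.
by move=> c_lt; apply: col; rewrite mem_iota.
Qed.

Lemma is_ssytE N nu T : is_ssyt N nu T <-> map size T = nu /\ ssyt N T.
Proof.
rewrite /ssyt all_reading_word; split.
  case=> shape rows cols bnd; split => //; apply/and3P; split.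
  - by apply/(all_nthP [::]) => r /rows.
  - by apply/(sortedP [::]) => r r_lt; apply/column_strictP => c; exact: cols.
  - by apply/(all_nthP [::]) => r /bnd.
case=> shape /and3P [rows cols bnd]; split => //.
- by move=> r; apply: (all_nthP [::] rows).
- by move=> r c r_lt; apply: (column_strictP _ _ ((sortedP [::] cols) r r_lt)).
- by move=> r; apply: (all_nthP [::] bnd).
Qed.

Lemma ssyt_bounded N T x : ssyt N T -> x \in reading_word T -> 0 < x <= N.+1.
Proof. by case/and3P=> _ _ /allP; apply. Qed.

Lemma sorted_cat_cons_cons (T : Type) (r : rel T) A x y B :
  sorted r (A ++ x :: y :: B) -> r x y.
Proof. by rewrite sorted_cat_cons => /andP [_ /andP []]. Qed.

Lemma sorted_rcons_cat_cons (T : Type) (r : rel T) A p x B :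
  sorted r (rcons A p ++ x :: B) -> r p x.
Proof. by rewrite cat_rcons; apply: sorted_cat_cons_cons. Qed.

Lemma sorted_set_mid (T : Type) (r : rel T) A x y B :
  sorted r (A ++ x :: B) ->
  (forall A' p, A = rcons A' p -> r p y) -> (forall b B', B = b :: B' -> r y b) ->
  sorted r (A ++ y :: B).
Proof.
have path_next x' : path r x' B -> (forall b B', B = b :: B' -> r y b) -> path r y B.
  by case: B => [|b B'] //= /andP [_ ->] next; rewrite (next b B').
case: A => [|a A'] /=; first by move=> px _; exact: path_next px.
rewrite !cat_path /= => /and3P [-> _ px] prev next.
by rewrite (prev (belast a A') (last a A')) ?lastI //= (path_next x).
Qed.

Lemma nth_cat_size (L R : seq nat) x : nth 0 (L ++ x :: R) (size L) = x.
Proof. by rewrite nth_cat ltnn subnn. Qed.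

Lemma nth_cat_add (s t : seq nat) j : nth 0 (s ++ t) (size s + j) = nth 0 t j.
Proof. by rewrite nth_cat ltnNge leq_addr addKn. Qed.

Lemma nth_cat_cons_neq (L R : seq nat) x y c : c != size L ->
  nth 0 (L ++ x :: R) c = nth 0 (L ++ y :: R) c.
Proof.
move=> c_neq; rewrite !nth_cat; case: ltngtP c_neq => // c_gt _.
by rewrite -(subnSK c_gt).
Qed.

Lemma column_strict_lt_cell u L x R :
  column_strict u (L ++ x :: R) -> nth 0 u (size L) < x.
Proof.
move=> /column_strictP /(_ (size L)); rewrite nth_cat_size size_cat addnS ltnS.
by apply; rewrite leq_addr.
Qed.

Lemma column_strict_cell_lt L x R w :
  column_strict (L ++ x :: R) w -> size L < size w -> x < nth 0 w (size L).
Proof. by move=> /column_strictP col /col; rewrite nth_cat_size. Qed.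

Lemma column_strict_setr u L R x y :
  column_strict u (L ++ x :: R) -> nth 0 u (size L) < y -> column_strict u (L ++ y :: R).
Proof.
move=> /column_strictP col u_lt; apply/column_strictP => c; rewrite !size_cat /= => c_lt.
case: (eqVneq c (size L)) => [-> | c_neq]; first by rewrite nth_cat_size.
by rewrite (nth_cat_cons_neq _ _ x) //; apply: col; rewrite size_cat.
Qed.

Lemma column_strict_setl L R x y w :
  column_strict (L ++ x :: R) w -> (size L < size w -> y < nth 0 w (size L)) ->
  column_strict (L ++ y :: R) w.
Proof.
move=> /column_strictP col w_gt; apply/column_strictP => c c_lt.
case: (eqVneq c (size L)) => [c_eq | c_neq]; first by subst c; rewrite nth_cat_size w_gt.
by rewrite (nth_cat_cons_neq _ _ x) //; apply: col.
Qed.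

Lemma ssyt_set_cell N (A B : tableau) L R x y :
  ssyt N (A ++ (L ++ x :: R) :: B) -> 0 < y <= N.+1 -> sorted leq (L ++ y :: R) ->
  (forall A' P, A = rcons A' P -> nth 0 P (size L) < y) ->
  (forall b B', B = b :: B' -> size L < size b -> y < nth 0 b (size L)) ->
  ssyt N (A ++ (L ++ y :: R) :: B).
Proof.
case/and3P=> rows cols bnd y_bnd row_y above below; apply/and3P; split.
- by move: rows; rewrite !all_cat /= row_y => /and3P [-> _ ->].
- apply: (sorted_set_mid cols) => [A' P eq_A | b B' eq_B].
    apply: column_strict_setr (above A' P eq_A).
    by move: cols; rewrite eq_A; apply: sorted_rcons_cat_cons.
  apply: column_strict_setl (below b B' eq_B).
  by move: cols; rewrite eq_B; apply: sorted_cat_cons_cons.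
- move: bnd; rewrite !reading_word_mid !all_cat /= y_bnd.
  by case/andP=> -> /andP [/andP [-> /andP [_ ->]] ->].
Qed.

Lemma count_mem_le_nth (s1 s2 : seq nat) x y : size s1 <= size s2 ->
  (forall j, j < size s1 -> nth 0 s1 j = x -> nth 0 s2 j = y) ->
  count_mem x s1 <= count_mem y s2.
Proof.
elim: s1 s2 => [|a s1 IH] [|b s2] //= le_size nth_xy.
apply: leq_add; last by apply: IH => // j; exact: (nth_xy j.+1).
by case: eqP => //= a_x; have /= -> := nth_xy 0 isT a_x; rewrite eqxx.
Qed.

(* Otherwise the letters i.+1 of [b] up to column [size L] outnumber the
   letters i of [L], so an opening bracket would remain unmatched before the
   letter changed by F_i. *)
Lemma below_cell_neq i L R b o : sorted leq b -> column_strict (L ++ i :: R) b ->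
  size L < size b -> nopen i (b ++ L) o = 0 -> nth 0 b (size L) != i.+1.
Proof.
move=> b_sorted /column_strictP col L_lt nopen0; apply/eqP => b_L.
suff : 0 < nopen i (b ++ L) o by rewrite nopen0.
have: count_mem i (rcons L i) <= count_mem i.+1 b.
  apply: count_mem_le_nth => [|j]; rewrite size_rcons // ltnS => j_le L_j.
  have j_lt : j < size b by apply: leq_ltn_trans L_lt.
  have := col j j_lt; rewrite nth_cat; move: L_j; rewrite nth_rcons.
  case: ltngtP j_le => // [j_L _ -> | -> _ _]; last by rewrite b_L.
  have := sorted_leq_nth leq_trans leqnn 0 b_sorted j (size L) j_lt L_lt (ltnW j_L).
  by rewrite b_L; lia.
rewrite -cats1 count_cat /= eqxx addn1 nopen_cat => count_lt.
apply: leq_trans (nopen_ge i L (nopen i b o)); rewrite subn_gt0.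
exact: leq_trans count_lt (count_open_le_nopen i o b_sorted).
Qed.

(* Otherwise the letters i of [P] from column [size L] on outnumber the letters
   i.+1 of [i.+1 :: R], so a closing bracket of [P] would remain unmatched. *)
Lemma above_cell_neq i L R P : sorted leq P -> column_strict P (L ++ i.+1 :: R) ->
  size (L ++ i.+1 :: R) <= size P -> matched i P (count_mem i.+1 R) ->
  nth 0 P (size L) != i.
Proof.
move=> P_sorted /column_strictP col size_le; apply: contraTN => /eqP P_L.
apply: sorted_unmatched => //; rewrite -(cat_take_drop (size L) P) count_cat.
apply: leq_trans (leq_addl _ _).
have: count_mem i.+1 (i.+1 :: R) <= count_mem i (drop (size L) P).
  apply: count_mem_le_nth => [|j j_lt row_j].
    by rewrite size_drop; move: size_le; rewrite size_cat; lia.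
  have jL_lt : size L + j < size (L ++ i.+1 :: R) by rewrite size_cat ltn_add2l.
  have := col _ jL_lt; rewrite nth_drop nth_cat_add row_j.
  have jP_lt : size L + j < size P := leq_trans jL_lt size_le.
  have := sorted_leq_nth leq_trans leqnn 0 P_sorted (size L) (size L + j)
    (leq_ltn_trans (leq_addr _ _) jP_lt) jP_lt (leq_addr _ _).
  by rewrite P_L; lia.
by rewrite /= eqxx.
Qed.

Lemma Fop_ssyt N i T T' : ssyt N T -> 0 < i <= N -> Fop i T = Some T' -> ssyt N T'.
Proof.
move=> ssyt_T i_range /Fop_SomeP [A [L [R [B [eq_T -> nopen0 matchedR]]]]]; subst T.
have row_sorted : sorted leq (L ++ i :: R).
  by case/and3P: ssyt_T; rewrite all_cat /= => /andP [_ /andP []].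
have R_gt y : y \in R -> i < y.
  case: R row_sorted matchedR {ssyt_T} => [|z R'] // row_sorted.
  case: (eqVneq z i) => [-> | z_neq _]; first by rewrite /= (ltn_eqF (ltnSn i)) eqxx.
  have z_ge : i <= z by have := sorted_cat_cons_cons row_sorted.
  have R'_ge := order_path_min leq_trans (path_sorted (cat_sorted2 row_sorted).2).
  by rewrite inE => /orP [/eqP -> | /(allP R'_ge) /=]; lia.
case/and3P: (ssyt_T) => rows cols _.
apply: (ssyt_set_cell ssyt_T) => [| | A' P eq_A | b B' eq_B L_lt]; first lia.
- apply: (sorted_set_mid row_sorted) => [L' x eq_L | y R' eq_R].
    by move: row_sorted; rewrite eq_L => /(sorted_rcons_cat_cons (r := leq)); lia.
  by apply: R_gt; rewrite eq_R mem_head.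
- move: cols; rewrite eq_A => /(sorted_rcons_cat_cons (r := column_strict)).
  by move=> /column_strict_lt_cell; lia.
- move: rows cols nopen0; rewrite eq_B all_cat /= => /andP [_ /and3P [_ b_sorted _]].
  move=> /(sorted_cat_cons_cons (r := column_strict)) col.
  rewrite reading_word_cons -catA nopen_cat => /(below_cell_neq b_sorted col L_lt).
  by have := column_strict_cell_lt col L_lt; lia.
Qed.

Lemma ssyt_Fop_preimage N i (A B : tableau) L R :
  ssyt N (A ++ (L ++ i.+1 :: R) :: B) ->
  sorted geq (map size (A ++ (L ++ i.+1 :: R) :: B)) -> 0 < i ->
  nopen i (reading_word B ++ L) 0 = 0 -> matched i (R ++ reading_word A) 0 ->
  ssyt N (A ++ (L ++ i :: R) :: B).
Proof.
move=> ssyt_T shape_sorted i_gt0 nopen0 matchedR.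
case/and3P: (ssyt_T) => rows cols _.
have row_sorted : sorted leq (L ++ i.+1 :: R).
  by move: rows; rewrite all_cat /= => /andP [_ /andP []].
have R_gt y : y \in R -> i < y.
  by move/(allP (order_path_min leq_trans (cat_sorted2 row_sorted).2)).
apply: (ssyt_set_cell ssyt_T) => [| | A' P eq_A | b B' eq_B L_lt].
- have := ssyt_bounded ssyt_T (x := i.+1).
  by rewrite reading_word_mid !mem_cat mem_head !orbT => /(_ isT); lia.
- apply: (sorted_set_mid row_sorted) => [L' x eq_L | y R' eq_R]; last first.
    by have := R_gt y; rewrite eq_R mem_head => /(_ isT); lia.
  move: row_sorted nopen0; rewrite eq_L => /(sorted_rcons_cat_cons (r := leq)) x_le.
  case: (eqVneq x i.+1) => [-> | x_neq _]; last lia.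
  by rewrite -cats1 catA nopen_cat /= eqxx.
- move: rows cols shape_sorted matchedR; rewrite eq_A all_cat all_rcons.
  case/andP=> /andP [P_sorted _] _.
  move=> /(sorted_rcons_cat_cons (r := column_strict)) col.
  rewrite map_cat map_rcons => /(sorted_rcons_cat_cons (r := geq)) size_le.
  rewrite reading_word_rcons !matched_cat nopen_no_close => [| y /R_gt]; last lia.
  case/and3P=> _ matched_P _.
  have := above_cell_neq P_sorted col size_le matched_P.
  by have := column_strict_lt_cell col; lia.
- move: cols; rewrite eq_B => /(sorted_cat_cons_cons (r := column_strict)).
  by move=> /column_strict_cell_lt /(_ L_lt); lia.
Qed.

Lemma Fop_preimage N i X : ssyt N X -> sorted geq (map size X) -> 0 < i ->
  0 < nopen i (reading_word X) 0 -> exists2 Y, ssyt N Y & Fop i Y = Some X.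
Proof.
move=> ssyt_X shape_sorted i_gt0 /nopen_pos_split [[] // | [u [v [word_X nopen_u matched_v]]]].
have [A [L [R [B [eq_X eq_u eq_v]]]]] := reading_word_split word_X; subst X u v.
by exists (A ++ (L ++ i :: R) :: B); [apply: ssyt_Fop_preimage | apply: Fop_at].
Qed.

(** * The least and the greatest tableau of a shape *)

Definition const_rows (sh : seq nat) (v : nat -> nat) : tableau :=
  mkseq (fun r => nseq (nth 0 sh r) (v r)) (size sh).

Lemma const_rows_shape sh v : map size (const_rows sh v) = sh.
Proof.
apply: (@eq_from_nth _ 0) => [|r]; rewrite size_map size_mkseq // => r_lt.
by rewrite (nth_map [::]) ?size_mkseq // nth_mkseq // size_nseq.
Qed.

Lemma mem_const_rows sh v x :
  x \in reading_word (const_rows sh v) -> exists2 r, r < size sh & x = v r.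
Proof.
case/reading_wordP=> row /mapP [r]; rewrite mem_iota => /andP [_ r_lt] ->.
by case/nseqP=> -> _; exists r.
Qed.

Lemma const_rows_rcons sh l v :
  const_rows (rcons sh l) v = rcons (const_rows sh v) (nseq l (v (size sh))).
Proof.
rewrite /const_rows size_rcons mkseqS nth_rcons ltnn eqxx; congr rcons.
apply: (@eq_from_nth _ [::]) => [|r]; rewrite !size_mkseq // => r_lt.
by rewrite !nth_mkseq ?nth_rcons ?r_lt.
Qed.

Lemma const_rows_ssyt N sh v : (forall r, r < size sh -> 0 < v r <= N.+1) ->
  (forall r, r.+1 < size sh -> v r < v r.+1) -> ssyt N (const_rows sh v).
Proof.
move=> v_bnd v_incr; apply/and3P; split.
- apply/allP => _ /mapP [r _ ->] /=.
  by apply/(sortedP 0) => j; rewrite size_nseq !nth_nseq => j_lt; rewrite j_lt (ltnW j_lt).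
- apply/(sortedP [::]) => r; rewrite size_mkseq => r_lt.
  rewrite !nth_mkseq ?(ltnW r_lt) //; apply/column_strictP => c; rewrite size_nseq !nth_nseq => ->.
  by case: ifP => _; [exact: v_incr | have /andP [] := v_bnd _ r_lt].
- by apply/allP => x /mem_const_rows [r r_lt ->]; exact: v_bnd.
Qed.

Definition lowest (mu : seq nat) : tableau := const_rows mu succn.

Lemma lowest_ssyt N mu : size mu <= N.+1 -> ssyt N (lowest mu).
Proof. by move=> mu_le; apply: const_rows_ssyt => r r_lt //=; lia. Qed.

Lemma ssyt_row_gt N X r (x : nat) : ssyt N X -> sorted geq (map size X) ->
  x \in nth [::] X r -> r < x.
Proof.
move=> ssyt_X shape_sorted; case/and3P: (ssyt_X) => _ cols _.
have row_lt k y : y \in nth [::] X k -> k < size X.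
  by rewrite ltnNge; apply: contraTN => /(nth_default [::]) ->.
elim: r x => [|r IH] x x_r.
  have : x \in reading_word X.
    by apply/reading_wordP; exists (nth [::] X 0); rewrite ?mem_nth ?(row_lt 0 x).
  by case/(ssyt_bounded ssyt_X)/andP.
have r_lt := row_lt _ _ x_r; set c := index x (nth [::] X r.+1).
have c_lt : c < size (nth [::] X r.+1) by rewrite index_mem.
have /column_strictP /(_ c c_lt) := (sortedP [::] cols) r r_lt.
have size_le : size (nth [::] X r.+1) <= size (nth [::] X r).
  have := (sortedP 0 shape_sorted) r; rewrite size_map.
  by rewrite !(nth_map [::]) ?(ltnW r_lt) // => /(_ r_lt).
by have := IH _ (mem_nth 0 (leq_trans c_lt size_le)); rewrite nth_index // => /leq_ltn_trans; apply.
Qed.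

Lemma lowest_of_nopen0 N X : sorted geq (map size X) -> ssyt N X ->
  (forall i, 0 < i <= N -> nopen i (reading_word X) 0 = 0) -> X = lowest (map size X).
Proof.
elim/last_ind: X => [|X z IH] // shape_sorted ssyt_Xz nopen0.
have ssyt_X : ssyt N X.
  move: ssyt_Xz; rewrite /ssyt -cats1 reading_word_cat !all_cat.
  by case/and3P=> /andP [-> _] /cat_sorted2 [-> _] /andP [_ ->].
have eq_X : X = lowest (map size X).
  apply: IH => [|//|i i_range].
    by move: shape_sorted; rewrite map_rcons -cats1 => /cat_sorted2 [].
  apply/eqP; rewrite -leqn0 -[X in _ <= X](nopen0 i i_range) reading_word_rcons nopen_cat.
  exact: nopen_monotone.
rewrite map_rcons /lowest const_rows_rcons size_map -/(lowest _) -eq_X; congr rcons.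
apply/all_pred1P/allP => x x_z.
have x_gt : size X < x by apply: (ssyt_row_gt ssyt_Xz shape_sorted); rewrite nth_rcons ltnn eqxx.
have /andP [_ x_le] : 0 < x <= N.+1.
  by apply: (ssyt_bounded ssyt_Xz); rewrite reading_word_rcons mem_cat x_z.
rewrite /= eqn_leq x_gt andbT leqNgt; apply/negP => x_gt2.
have x_pred_range : 0 < x.-1 <= N by lia.
have := nopen0 _ x_pred_range; rewrite reading_word_rcons nopen_cat nopen_avoid; last first.
  apply/allP => y; rewrite eq_X => /mem_const_rows [r]; rewrite size_map /avoids => r_lt ->; lia.
apply/eqP; rewrite -lt0n; apply: leq_trans (count_open_le_nopen _ _ _); last first.
  by case/and3P: ssyt_Xz => /allP rows _ _; apply: rows; rewrite mem_rcons mem_head.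
by rewrite -has_count; apply/hasP; exists x => //=; apply/eqP; lia.
Qed.

Lemma lowest_Ble N X : sorted geq (map size X) -> ssyt N X -> Ble N (lowest (map size X)) X.
Proof.
move=> shape_sorted ssyt_X; have [k] := ubnP (sumn (reading_word X)).
elim: k X shape_sorted ssyt_X => // k IH X shape_sorted ssyt_X sum_lt.
case: (boolP [exists i : 'I_N, 0 < nopen i.+1 (reading_word X) 0]) => [|no_open].
  case/existsP=> i nopen_pos.
  have [Y ssyt_Y FY] := Fop_preimage ssyt_X shape_sorted (ltn0Sn i) nopen_pos.
  have shape_Y := Fop_shape FY.
  apply: rt_trans (rt_step _ _ _ _ (ex_intro2 _ _ i.+1 _ FY)); last by rewrite ltn0Sn ltn_ord.
  by rewrite shape_Y; apply: IH; rewrite -?shape_Y // -ltnS -(sumn_Fop FY).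
rewrite -(lowest_of_nopen0 shape_sorted ssyt_X); first exact: rt_refl.
move=> [//|i] /andP [_ i_lt]; apply/eqP; rewrite -leqn0 leqNgt.
by apply: contra no_open => pos; apply/existsP; exists (Ordinal i_lt).
Qed.

(* Read from the bottom, every column is N+1, N, N-1, ...: each row is the row
   below it decreased by one and padded with N+1. *)
Fixpoint highest N (mu : seq nat) : tableau :=
  match mu with
  | [::] => [::]
  | l :: mu' => let h := head [::] (highest N mu') in
                (map predn h ++ nseq (l - size h) N.+1) :: highest N mu'
  end.

Lemma highest_shape N mu : sorted geq mu -> map size (highest N mu) = mu.
Proof.
suff shape_head : sorted geq mu ->
    map size (highest N mu) = mu /\ size (head [::] (highest N mu)) = head 0 mu.
  by case/shape_head.
elim: mu => //= l mu IH mu_sorted; have [-> size_h] := IH (path_sorted mu_sorted).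
have head_le : head 0 mu <= l by case: mu mu_sorted {IH size_h} => //= ? ? /andP [].
by rewrite size_cat size_map size_nseq size_h subnKC.
Qed.

Lemma highest_entries N mu :
  all (all (fun x => N.+2 - size mu <= x <= N.+1)) (highest N mu).
Proof.
elim: mu => //= l mu IH; rewrite (sub_all _ IH) ?andbT => [|r]; last by apply: sub_all => x /=; lia.
rewrite all_cat all_map; apply/andP; split.
  by case: (highest N mu) IH => //= h _ /andP [/allP h_ent _]; apply/allP => x /h_ent /=; lia.
by apply/allP => x /nseqP [-> _]; lia.
Qed.

Lemma sorted_nseq (x n : nat) : sorted leq (nseq n x).
Proof. by elim: n => //= -[|n] //= ->; rewrite leqnn. Qed.

Lemma highest_rows N mu : all (sorted leq) (highest N mu).
Proof.
elim: mu => //= l mu IH; rewrite IH andbT.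
rewrite (sorted_pairwise leq_trans) pairwise_cat -!(sorted_pairwise leq_trans) sorted_nseq andbT.
have := highest_entries N mu.
case: (highest N mu) IH => [|h X] //= /andP [h_sorted _] /andP [h_ent _].
apply/andP; split.
  by apply/allrelP => _ y /mapP [x x_h ->] /nseqP [-> _]; have := allP h_ent x x_h; lia.
by rewrite sorted_map; apply: sub_sorted h_sorted => x y /=; lia.
Qed.

Lemma highest_ssyt N mu : size mu <= N.+1 -> ssyt N (highest N mu).
Proof.
move=> mu_le; have ent := highest_entries N mu; apply/and3P; split.
- exact: highest_rows.
- elim: mu mu_le {ent} => //= l mu IH mu_le.
  have := highest_entries N mu; case: (highest N mu) IH => [|h X] //= IH /andP [h_ent _].
  rewrite IH ?andbT; last lia.
  apply/column_strictP => c c_lt; rewrite nth_cat size_map c_lt (nth_map 0) //.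
  by have /= := allP h_ent _ (mem_nth 0 c_lt); lia.
- by rewrite all_reading_word; apply: sub_all ent => r; apply: sub_all => x /=; lia.
Qed.

Lemma count_predn v (s : seq nat) : 0 < v ->
  count_mem v (map predn s) = count_mem v.+1 s.
Proof. by move=> v_gt0; rewrite count_map; apply: eq_count => -[|x] /=; rewrite ?eqSS //; lia. Qed.

Lemma count_highest N mu v : 0 < v <= N ->
  count_mem v.+1 (flatten (highest N mu)) =
  count_mem v (flatten (highest N mu)) + count_mem v.+1 (head [::] (highest N mu)).
Proof.
move=> v_range; elim: mu => //= l mu IH; set h := head [::] _.
have top_row : count_mem v (map predn h ++ nseq (l - size h) N.+1) = count_mem v.+1 h.
  by rewrite count_cat count_predn ?count_nseq /= ?(gtn_eqF (_ : v < N.+1)) ?addn0 //; lia.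
by rewrite count_cat [in RHS]count_cat top_row IH -/h [RHS]addnC (addnC (count_mem v.+1 h)).
Qed.

Lemma matched_count_top i (x : seq nat) (X : tableau) : sorted leq x ->
  matched i (reading_word (x :: X)) 0 ->
  count_mem i (flatten X) + count_mem i x <= count_mem i.+1 (flatten X).
Proof.
move=> x_sorted; set k := find (fun y => i < y) x.
have take_le : count_mem i.+1 (take k x) = 0.
  apply/count_memPn/negP => /(nthP 0) [j]; rewrite size_take_min ltn_min => /andP [j_lt _].
  by rewrite nth_take // => x_j; have := before_find 0 j_lt; rewrite /= x_j ltnSn.
have drop_gt : count_mem i (drop k x) = 0.
  apply/count_memPn; case: (ltnP k (size x)) => [k_lt | ]; last by move/drop_oversize ->.
  have x_k : i < nth 0 x k by apply: (nth_find 0 (a := fun y => i < y)); rewrite has_find.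
  have := drop_sorted k x_sorted; rewrite (drop_nth 0 k_lt).
  move=> /(order_path_min leq_trans) /allP x_ge.
  by apply/negP; rewrite inE => /orP [/eqP | /x_ge]; lia.
rewrite reading_word_cons -(cat_take_drop k x) catA => /matched_prefix.
by rewrite !count_cat !count_reading_word drop_gt take_le !addn0 add0n.
Qed.

Lemma eq_sorted_count (s t : seq nat) K : sorted leq s -> sorted leq t ->
  size s = size t -> (forall j, nth 0 s j <= nth 0 t j) -> all (fun y => y <= K) t ->
  (forall v, 0 < v < K -> count_mem v s <= count_mem v t) -> all (fun x => 0 < x) s ->
  s = t.
Proof.
elim: s t => [|x s IH] [|y t] //= s_sorted t_sorted [size_eq] le_nth /andP [y_le t_le].
move=> count_le /andP [x_pos s_pos].
have x_le_y : x <= y by apply: (le_nth 0).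
have x_eq_y : x = y.
  apply/eqP; rewrite eqn_leq x_le_y leqNgt; apply/negP => x_lt.
  have x_notin : x \notin y :: t.
    apply/negP; rewrite inE => /orP [/eqP | /(allP (order_path_min leq_trans t_sorted))]; lia.
  have : count_mem x (x :: s) <= count_mem x (y :: t) by apply: count_le; lia.
  by rewrite (count_memPn x_notin) /= eqxx.
subst y; congr cons; apply: IH => [|||||v v_range|] //.
- exact: path_sorted s_sorted.
- exact: path_sorted t_sorted.
- by move=> j; apply: (le_nth j.+1).
- by have := count_le v v_range; rewrite /= leq_add2l.
Qed.

Lemma ssyt_behead N x (X : tableau) : ssyt N (x :: X) -> ssyt N X.
Proof.
case/and3P=> /= /andP [_ rows] /path_sorted cols.
by rewrite reading_word_cons all_cat => /andP [bnd _]; apply/and3P.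
Qed.

Lemma highest_top_row N x (X : tableau) : sorted geq (map size (x :: X)) ->
  ssyt N (x :: X) -> X = highest N (map size X) ->
  (forall i, 0 < i <= N -> matched i (reading_word (x :: X)) 0) ->
  x = map predn (head [::] X) ++ nseq (size x - size (head [::] X)) N.+1.
Proof.
move=> shape_sorted ssyt_xX eq_X matched_all; set h := head [::] X.
have ssyt_X := ssyt_behead ssyt_xX.
case/and3P: ssyt_xX => /= /andP [x_sorted _] cols bnd.
have x_h : column_strict x h by rewrite /h; case: (X) cols => //= ? ? /andP [].
have size_le : size h <= size x by rewrite /h; case: (X) shape_sorted => //= ? ? /andP [].
have x_bnd y : y \in x -> 0 < y <= N.+1.
  by move=> y_x; apply: (allP bnd); rewrite reading_word_cons mem_cat y_x orbT.
have h_le y : y \in h -> y <= N.+1.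
  move=> y_h; have : y \in reading_word X.
    move: y_h; rewrite /h; case: (X) => [|r X'] /= y_r; first by rewrite in_nil in y_r.
    by rewrite reading_word_cons mem_cat y_r orbT.
  by case/(ssyt_bounded ssyt_X)/andP.
have top_sorted : sorted leq (map predn h ++ nseq (size x - size h) N.+1).
  by have /= /andP [] := highest_rows N (size x :: map size X); rewrite -eq_X.
apply: (eq_sorted_count (K := N.+1)) => //.
- by rewrite size_cat size_map size_nseq subnKC.
- move=> j; rewrite nth_cat size_map; case: ltnP => [j_lt | j_ge].
    by rewrite (nth_map 0) //; have := (column_strictP _ _ x_h) j j_lt; lia.
  rewrite nth_nseq; case: ifP => j_lt; last by rewrite nth_default //; lia.
  have j_x : j < size x by lia.
  by case/andP: (x_bnd _ (mem_nth 0 j_x)).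
- rewrite all_cat all_map; apply/andP; split; apply/allP => y; last by case/nseqP=> ->.
  by move/h_le => /=; lia.
- move=> v /andP [v_gt0 v_lt].
  rewrite count_cat count_predn // count_nseq /= (gtn_eqF v_lt) addn0.
  have v_range : 0 < v <= N by lia.
  have := matched_count_top x_sorted (matched_all v v_range).
  by have := count_highest (map size X) v_range; rewrite -eq_X => ->; rewrite leq_add2l.
- by apply/allP => y /x_bnd /andP [].
Qed.

Lemma highest_of_matched N X : sorted geq (map size X) -> ssyt N X ->
  (forall i, 0 < i <= N -> matched i (reading_word X) 0) -> X = highest N (map size X).
Proof.
elim: X => [|x X IH] //= shape_sorted ssyt_xX matched_all.
have eq_X : X = highest N (map size X).
  apply: IH (path_sorted shape_sorted) (ssyt_behead ssyt_xX) _ => i /matched_all.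
  by rewrite reading_word_cons matched_cat => /andP [].
by rewrite -eq_X; congr cons; apply: highest_top_row.
Qed.

Lemma sumn_le_mul K (s : seq nat) : all (fun x => x <= K) s -> sumn s <= K * size s.
Proof. by elim: s => //= x s IH /andP [x_le /IH]; rewrite mulnS; apply: leq_add. Qed.

Lemma Ble_highest N X : sorted geq (map size X) -> ssyt N X ->
  Ble N X (highest N (map size X)).
Proof.
move=> shape_sorted ssyt_X.
have [k] := ubnP (N.+1 * size (reading_word X) - sumn (reading_word X)).
elim: k X shape_sorted ssyt_X => // k IH X shape_sorted ssyt_X gap_lt.
case: (boolP [exists i : 'I_N, ~~ matched i.+1 (reading_word X) 0]) => [|all_matched].
  case/existsP=> i unmatched.
  have i_range : 0 < i.+1 <= N by rewrite ltn_ord.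
  case FX: (Fop i.+1 X) => [Y|]; last by move/Fop_NoneE: FX; rewrite (negbTE unmatched).
  have shape_Y := Fop_shape FX; have ssyt_Y := Fop_ssyt ssyt_X i_range FX.
  apply: rt_trans (rt_step _ _ _ _ (ex_intro2 _ _ i.+1 i_range FX)) _.
  rewrite -shape_Y; apply: IH; rewrite ?shape_Y //.
  have Y_le : all (fun y => y <= N.+1) (reading_word Y).
    by apply/allP => y /(ssyt_bounded ssyt_Y) /andP [].
  by move: (sumn_le_mul Y_le) gap_lt; rewrite (sumn_Fop FX) !size_reading_word shape_Y; lia.
rewrite -highest_of_matched //; first exact: rt_refl.
move=> [//|i] /andP [_ i_lt]; apply: contraNT all_matched => unmatched.
by apply/existsP; exists (Ordinal i_lt).
Qed.

(** * Shifting and stacking tableaux *)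

Definition shift d (X : tableau) : tableau := map (map (addn^~ d)) X.

Lemma reading_word_shift d X : reading_word (shift d X) = map (addn^~ d) (reading_word X).
Proof. exact: reading_word_map. Qed.

Lemma shift_shape d X : map size (shift d X) = map size X.
Proof. by rewrite -map_comp; apply: eq_map => r /=; rewrite size_map. Qed.

Lemma shift_inj d : injective (shift d).
Proof. by apply: inj_map; apply: inj_map; apply: addIn. Qed.

Lemma shiftK d Z : all (fun x => d <= x) (reading_word Z) ->
  shift d (map (map (subn^~ d)) Z) = Z.
Proof.
rewrite all_reading_word /shift -map_comp => /allP Z_ge.
rewrite -[RHS]map_id; apply/eq_in_map => r /Z_ge /allP r_ge /=.
by rewrite -map_comp -[RHS]map_id; apply/eq_in_map => x /r_ge /= /subnK.
Qed.

Lemma column_strict_shift d u w : all (fun y => 0 < y) w ->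
  column_strict (map (addn^~ d) u) (map (addn^~ d) w) = column_strict u w.
Proof.
move=> /(all_nthP 0) w_pos.
have nth_shift c : c < size w ->
    (nth 0 (map (addn^~ d) u) c < nth 0 (map (addn^~ d) w) c) = (nth 0 u c < nth 0 w c).
  move=> c_lt; rewrite [nth 0 (map _ w) c](nth_map 0) //; case: (ltnP c (size u)) => c_u.
    by rewrite (nth_map 0) // ltn_add2r.
  by rewrite (nth_default 0 c_u) nth_default ?size_map // addn_gt0 w_pos.
apply/column_strictP/column_strictP => col c; rewrite ?size_map => c_lt.
  by rewrite -nth_shift //; apply: col; rewrite size_map.
by rewrite nth_shift //; apply: col.
Qed.

Lemma ssyt_shift N d X : all (fun x => 0 < x) (reading_word X) ->
  ssyt (N + d) (shift d X) = ssyt N X.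
Proof.
move=> X_pos; rewrite /ssyt reading_word_shift all_map; congr [&& _, _ & _].
- rewrite all_map; apply: eq_all => r /=; rewrite sorted_map.
  by apply: eq_sorted => x y /=; rewrite leq_add2r.
- rewrite sorted_map; apply: (eq_in_sorted (P := fun r => all (fun x => 0 < x) r)).
    by move=> u w _ w_pos /=; rewrite column_strict_shift.
  by rewrite -all_reading_word.
- by apply: eq_in_all => x /(allP X_pos) /= x_pos; rewrite addn_gt0 x_pos -addSn leq_add2r.
Qed.

Lemma shift_range N d X : ssyt N X ->
  all (fun x => d < x <= N.+1 + d) (reading_word (shift d X)).
Proof.
case/and3P=> _ _ /allP bnd; rewrite reading_word_shift all_map.
by apply/allP => x /bnd /=; lia.
Qed.

Lemma ssyt_cat N (A B : tableau) : ssyt N (A ++ B) -> ssyt N A /\ ssyt N B.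
Proof.
rewrite /ssyt reading_word_cat !all_cat.
by case/and3P=> /andP [-> ->] /cat_sorted2 [-> ->] /andP [-> ->].
Qed.

Lemma ssyt_rebound N N' X : ssyt N X -> all (fun x => x <= N'.+1) (reading_word X) ->
  ssyt N' X.
Proof.
move=> /and3P [rows cols bnd] bnd'; apply/and3P; split => //.
by apply/allP => x x_X; rewrite (allP bnd' x x_X) andbT; case/andP: (allP bnd x x_X).
Qed.

Lemma sorted_cat_rel (T : eqType) (r : rel T) s1 s2 : sorted r s1 -> sorted r s2 ->
  (forall x y, x \in s1 -> y \in s2 -> r x y) -> sorted r (s1 ++ s2).
Proof.
case: s1 => [|x0 s1] //= s1_sorted s2_sorted r12; rewrite cat_path s1_sorted /=.
by case: s2 s2_sorted r12 => [|y s2] //= -> r12; rewrite r12 ?mem_last ?mem_head.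
Qed.

Lemma column_strict_lt u w : (forall x y, x \in u -> y \in w -> x < y) ->
  all (fun y => 0 < y) w -> column_strict u w.
Proof.
move=> lt_uw /allP w_pos; apply/column_strictP => c c_lt; have w_c := mem_nth 0 c_lt.
case: (ltnP c (size u)) => [c_u | /(nth_default 0) ->]; last exact: w_pos.
by apply: lt_uw; rewrite ?mem_nth.
Qed.

Lemma ssyt_cat_lt N (A B : tableau) : ssyt N A -> ssyt N B ->
  (forall x y, x \in reading_word A -> y \in reading_word B -> x < y) -> ssyt N (A ++ B).
Proof.
move=> /and3P [rA cA bA] /and3P [rB cB bB] lt_AB; apply/and3P; split.
- by rewrite all_cat rA.
- apply: sorted_cat_rel => // u w u_A w_B; apply: column_strict_lt.
    by move=> x y x_u y_w; apply: lt_AB; apply/reading_wordP; [exists u | exists w].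
  apply/allP => y y_w; have /reading_wordP y_B : exists2 r, r \in B & y \in r by exists w.
  by case/andP: (allP bB y y_B).
- by rewrite reading_word_cat all_cat bB bA.
Qed.

Lemma shape_split (Z : tableau) s1 s2 s3 : map size Z = s1 ++ s2 ++ s3 ->
  exists Z1 Z2 Z3, [/\ Z = Z1 ++ Z2 ++ Z3, map size Z1 = s1, map size Z2 = s2
                     & map size Z3 = s3].
Proof.
move=> shape_Z; exists (take (size s1) Z), (take (size s2) (drop (size s1) Z)).
exists (drop (size s2) (drop (size s1) Z)); rewrite !cat_take_drop; split => //.
- by rewrite map_take shape_Z take_size_cat.
- by rewrite map_take map_drop shape_Z drop_size_cat // take_size_cat.
- by rewrite !map_drop shape_Z !drop_size_cat.
Qed.

(** * Entrywise comparison of reading words *)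

Definition tab_leq (T T' : tableau) : Prop :=
  map size T = map size T' /\ forall p, nth 0 (reading_word T) p <= nth 0 (reading_word T') p.

Lemma tab_leq_refl T : tab_leq T T.
Proof. by split. Qed.

Lemma tab_leq_trans T1 T2 T3 : tab_leq T1 T2 -> tab_leq T2 T3 -> tab_leq T1 T3.
Proof.
move=> [shape12 le12] [shape23 le23].
by split => [|p]; [rewrite shape12 | apply: leq_trans (le12 p) (le23 p)].
Qed.

Lemma tab_leq_antisym T T' : tab_leq T T' -> tab_leq T' T -> T = T'.
Proof.
move=> [shape le1] [_ le2]; apply: reading_word_inj => //.
apply: (@eq_from_nth _ 0) => [|p _]; first by rewrite !size_reading_word shape.
by apply/eqP; rewrite eqn_leq le1 le2.
Qed.

Lemma Fop_tab_leq i T T' : Fop i T = Some T' -> tab_leq T T'.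
Proof.
move=> FT; split; first by rewrite (Fop_shape FT).
case/Fop_SomeP: FT => [A [L [R [B [-> -> _ _]]]]] p.
rewrite !reading_word_mid -!catA !nth_cat; case: ifP => // _; case: ifP => // _.
by case: (_ - _ - _).
Qed.

Lemma Ble_tab_leq N T T' : Ble N T T' -> tab_leq T T'.
Proof.
elim=> [x y [i _ /Fop_tab_leq //] | x | x y z _ le_xy _ le_yz].
  exact: tab_leq_refl.
exact: tab_leq_trans le_xy le_yz.
Qed.

Lemma tab_leq_cat (A1 A2 B1 B2 : tableau) : map size A1 = map size B1 ->
  tab_leq (A1 ++ A2) (B1 ++ B2) -> tab_leq A1 B1 /\ tab_leq A2 B2.
Proof.
move=> shape1 [shape le_AB].
have shape2 : map size A2 = map size B2.
  move: shape; rewrite !map_cat shape1 => /(congr1 (drop (size (map size B1)))).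
  by rewrite !drop_size_cat.
have size2 : size (reading_word A2) = size (reading_word B2) by rewrite !size_reading_word shape2.
split; split => // p.
  have := le_AB (size (reading_word A2) + p).
  by rewrite !reading_word_cat !nth_cat_add size2 nth_cat_add.
case: (ltnP p (size (reading_word A2))) => p_lt; last by rewrite nth_default.
by have := le_AB p; rewrite !reading_word_cat !nth_cat p_lt -size2 p_lt.
Qed.

Lemma tab_leq_between lo hi A Z C : tab_leq A Z -> tab_leq Z C ->
  all (fun x => lo < x) (reading_word A) -> all (fun x => x <= hi) (reading_word C) ->
  all (fun x => lo < x <= hi) (reading_word Z).
Proof.
move=> [shapeAZ le_AZ] [shapeZC le_ZC] /(all_nthP 0) A_gt /(all_nthP 0) C_le.
apply/(all_nthP 0) => p p_lt; rewrite /= (leq_trans (le_ZC p)) ?(leq_trans _ (le_AZ p)) //.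
- by apply: A_gt; rewrite size_reading_word shapeAZ -size_reading_word.
- by apply: C_le; rewrite size_reading_word -shapeZC -size_reading_word.
Qed.

(** * Order isomorphisms onto intervals *)

Definition iso_onto_interval (Q : tableau -> Prop) (leQ : relation tableau)
    (P : tableau -> Prop) (leP : relation tableau) (S T : tableau) (f : tableau -> tableau) :=
  P S /\ P T /\ leP S T /\
  (forall X, Q X -> P (f X) /\ leP S (f X) /\ leP (f X) T) /\
  (forall X Y, Q X -> Q Y -> f X = f Y -> X = Y) /\
  (forall Z, P Z -> leP S Z -> leP Z T -> exists2 X, Q X & f X = Z) /\
  (forall X Y, Q X -> Q Y -> (leQ X Y <-> leP (f X) (f Y))).

Lemma iso_onto_interval_lattice Q leQ P leP S T f :
  iso_onto_interval Q leQ P leP S T f -> (forall x y z, leP x y -> leP y z -> leP x z) ->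
  is_lattice P leP -> is_lattice Q leQ.
Proof.
move=> [PS [PT [_ [image [_ [onto order]]]]]] leP_trans lattice_P x y Qx Qy.
have [Px [Sx xT]] := image x Qx; have [Py [Sy yT]] := image y Qy.
have [[z [Pz xz yz z_min]] [w [Pw wx wy w_max]]] := lattice_P _ _ Px Py.
split.
  have [X QX eq_z] := onto z Pz (leP_trans _ _ _ Sx xz) (z_min T PT xT yT); subst z.
  exists X; split => //; [exact/(order _ _ Qx QX) | exact/(order _ _ Qy QX) |].
  move=> u Qu /(order _ _ Qx Qu) xu /(order _ _ Qy Qu) yu; apply/(order _ _ QX Qu).
  by apply: z_min => //; case: (image u Qu).
have [X QX eq_w] := onto w Pw (w_max S PS Sx Sy) (leP_trans _ _ _ wx xT); subst w.
exists X; split => //; [exact/(order _ _ QX Qx) | exact/(order _ _ QX Qy) |].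
move=> u Qu /(order _ _ Qu Qx) ux /(order _ _ Qu Qy) uy; apply/(order _ _ Qu QX).
by apply: w_max => //; case: (image u Qu).
Qed.

(** * The embedding *)

Section Embedding.

Variables (N n d : nat) (top bot : tableau).
Hypothesis top_small : all (fun x => x <= d) (reading_word top).
Hypothesis bot_large : all (fun x => N.+1 + d < x) (reading_word bot).

Definition embed (X : tableau) : tableau := top ++ shift d X ++ bot.

Lemma reading_word_embed X : reading_word (embed X) =
  reading_word bot ++ map (addn^~ d) (reading_word X) ++ reading_word top.
Proof. by rewrite /embed !reading_word_cat reading_word_shift catA. Qed.

Lemma embed_inj : injective embed.
Proof.
move=> X Y /(congr1 (drop (size top))); rewrite !drop_size_cat // => eq_XY.
have size_eq : size (shift d X) = size (shift d Y).
  by move/(congr1 size): eq_XY; rewrite !size_cat => /addIn.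
move/(congr1 (take (size (shift d X)))): eq_XY.
by rewrite take_size_cat // size_eq take_size_cat // => /shift_inj.
Qed.

Lemma Fop_embed j X : 0 < j <= N -> Fop (j + d) (embed X) = omap embed (Fop j X).
Proof.
move=> j_range.
have top_avoid : all (avoids (j + d)) (reading_word top).
  by apply: sub_all top_small => x /=; rewrite /avoids; lia.
have bot_avoid : all (avoids (j + d)) (reading_word bot).
  by apply: sub_all bot_large => x /=; rewrite /avoids; lia.
case FX: (Fop j X) => [X'|] /=.
  case/Fop_SomeP: FX => [A [L [R [B [-> -> nopen0 matchedR]]]]].
  have embed_cell x : embed (A ++ (L ++ x :: R) :: B) =
      (top ++ shift d A) ++ (map (addn^~ d) L ++ (x + d) :: map (addn^~ d) R) :: (shift d B ++ bot).
    by rewrite /embed /shift map_cat /= map_cat -!catA.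
  rewrite !embed_cell addSn; apply: Fop_at.
    rewrite reading_word_cat -catA nopen_cat (nopen_avoid _ bot_avoid).
    by rewrite reading_word_shift -map_cat nopen_shift.
  rewrite reading_word_cat reading_word_shift catA -map_cat.
  by rewrite matched_cat matched_shift matchedR matched_avoid.
apply/Fop_NoneE; move/Fop_NoneE: FX.
rewrite reading_word_embed !matched_cat (matched_avoid _ bot_avoid) (nopen_avoid _ bot_avoid).
rewrite matched_shift => -> /=.
exact: matched_avoid.
Qed.

Hypotheses (ssyt_top : ssyt n top) (ssyt_bot : ssyt n bot) (le_Nd_n : N + d <= n).

Lemma embed_ssyt X : ssyt N X -> ssyt n (embed X).
Proof.
move=> ssyt_X; have /allP X_range := shift_range d ssyt_X.
have ssyt_mid : ssyt n (shift d X).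
  apply: (ssyt_rebound (N := N + d)); last by apply/allP => x /X_range; lia.
  by rewrite ssyt_shift //; case/and3P: ssyt_X => _ _; apply: sub_all => x /andP [].
have bot_gt y : y \in reading_word bot -> N.+1 + d < y by move/(allP bot_large).
apply: (ssyt_cat_lt ssyt_top (ssyt_cat_lt ssyt_mid ssyt_bot _)) => x y.
  by move=> /X_range x_range /bot_gt; lia.
move=> x_top; have := allP top_small x x_top; rewrite reading_word_cat mem_cat.
by move=> /= x_le /orP [/bot_gt | /X_range]; lia.
Qed.

Lemma Ble_embed X Y : Ble N X Y -> Ble n (embed X) (embed Y).
Proof.
elim=> [X1 X2 [j j_range FX] | X1 | X1 X2 X3 _ le12 _ le23].
- by apply: rt_step; exists (j + d); [lia | rewrite Fop_embed // FX].
- exact: rt_refl.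
- exact: rt_trans le12 le23.
Qed.

Lemma nth_embed X Y p : ssyt N X -> ssyt N Y -> map size X = map size Y ->
  nth 0 (reading_word (embed X)) p = nth 0 (reading_word (embed Y)) p \/
  d < nth 0 (reading_word (embed X)) p /\ nth 0 (reading_word (embed Y)) p <= N.+1 + d.
Proof.
move=> ssyt_X ssyt_Y shape_XY.
have size_XY : size (reading_word Y) = size (reading_word X) by rewrite !size_reading_word shape_XY.
rewrite !reading_word_embed !nth_cat !size_map size_XY.
case: ltnP => _; first by left.
case: ltnP => p_lt; last by left.
right; rewrite !(nth_map 0) ?size_XY //.
have /andP [X_gt0 _] := ssyt_bounded ssyt_X (mem_nth 0 p_lt).
have p_lt' : p - size (reading_word bot) < size (reading_word Y) by rewrite size_XY.
have /andP [_ Y_le] := ssyt_bounded ssyt_Y (mem_nth 0 p_lt').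
by split; [rewrite -[X in X < _]add0n ltn_add2r | rewrite leq_add2r].
Qed.

Lemma Fop_embed_inv X Y X1 i W : ssyt N X -> ssyt N Y -> map size X = map size Y ->
  tab_leq (embed X) (embed X1) -> Fop i (embed X1) = Some W -> tab_leq W (embed Y) ->
  exists2 X2, step N X1 X2 & W = embed X2.
Proof.
move=> ssyt_X ssyt_Y shape_XY [_ le_X] FX1 [_ le_Y].
have [A [L [R [B [eq_X1 eq_W _ _]]]]] := Fop_SomeP FX1.
set p := size (reading_word B ++ L).
have nth_cell x : nth 0 (reading_word (A ++ (L ++ x :: R) :: B)) p = x.
  by rewrite reading_word_cell nth_cat_size.
have := le_X p; have := le_Y p; rewrite eq_X1 eq_W !nth_cell.
have [-> | [d_lt le_Nd]] := nth_embed p ssyt_X ssyt_Y shape_XY; first lia.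
move=> le_iY le_Xi; have j_range : 0 < i - d <= N by lia.
have := Fop_embed X1 j_range; rewrite subnK ?FX1; last lia.
by case F_X1: (Fop (i - d) X1) => [X2|] //= [eq_W2]; exists X2; [exists (i - d) | rewrite -eq_W].
Qed.

Lemma Ble_embedK X Y : ssyt N X -> ssyt N Y -> map size X = map size Y ->
  Ble n (embed X) (embed Y) -> Ble N X Y.
Proof.
move=> ssyt_X ssyt_Y shape_XY /clos_rt_rt1n_iff le_XY.
suff : forall W V, clos_refl_trans_1n _ (step n) W V -> V = embed Y ->
    forall X1, W = embed X1 -> tab_leq (embed X) W -> Ble N X1 Y.
  by move/(_ _ _ le_XY erefl X erefl (tab_leq_refl _)).
move=> W V; elim=> [Z | Z W' V' [i _ FZ] W'V IH] eq_V X1 eq_Z le_XZ.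
  by rewrite eq_Z in eq_V; rewrite (embed_inj eq_V); apply: rt_refl.
have le_W'Y : tab_leq W' (embed Y).
  by rewrite -eq_V; apply: (Ble_tab_leq (N := n)); apply: clos_rt1n_rt.
rewrite eq_Z in FZ le_XZ.
have [X2 step_X12 eq_W'] := Fop_embed_inv ssyt_X ssyt_Y shape_XY le_XZ FZ le_W'Y.
apply: rt_trans (rt_step _ _ _ _ step_X12) (IH eq_V X2 eq_W' _).
exact: tab_leq_trans le_XZ (Fop_tab_leq FZ).
Qed.

Lemma embed_sandwich X Y Z : map size X = map size Y ->
  tab_leq (embed X) Z -> tab_leq Z (embed Y) ->
  exists Zm, [/\ Z = top ++ Zm ++ bot, tab_leq (shift d X) Zm & tab_leq Zm (shift d Y)].
Proof.
move=> shape_XY le_XZ le_ZY; have [shape_Z _] := le_XZ.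
rewrite /embed !map_cat in shape_Z.
have [Zt [Zm [Zb [eq_Z shape_t shape_m shape_b]]]] := shape_split (esym shape_Z).
rewrite eq_Z /embed in le_XZ le_ZY *.
have [le_tZ le_XZ'] := tab_leq_cat (esym shape_t) le_XZ.
have [le_XZm le_bZ] := tab_leq_cat (esym shape_m) le_XZ'.
have [le_Zt le_ZY'] := tab_leq_cat shape_t le_ZY.
have shape_mY : map size Zm = map size (shift d Y) by rewrite shape_m !shift_shape.
have [le_ZmY le_Zb] := tab_leq_cat shape_mY le_ZY'.
by exists Zm; rewrite (tab_leq_antisym le_Zt le_tZ) (tab_leq_antisym le_Zb le_bZ).
Qed.

Lemma embed_onto X Y Z : ssyt N X -> ssyt N Y -> map size X = map size Y -> ssyt n Z ->
  tab_leq (embed X) Z -> tab_leq Z (embed Y) ->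
  exists2 W, map size W = map size X /\ ssyt N W & embed W = Z.
Proof.
move=> ssyt_X ssyt_Y shape_XY ssyt_Z le_XZ le_ZY.
have [Zm [eq_Z le_XZm le_ZmY]] := embed_sandwich shape_XY le_XZ le_ZY.
have /allP Zm_range : all (fun x => d < x <= N.+1 + d) (reading_word Zm).
  apply: tab_leq_between le_XZm le_ZmY _ _.
    by apply: sub_all (shift_range d ssyt_X) => x /andP [].
  by apply: sub_all (shift_range d ssyt_Y) => x /andP [].
set W := map (map (subn^~ d)) Zm.
have shiftW : shift d W = Zm by apply: shiftK; apply/allP => x /Zm_range; lia.
have W_pos : all (fun x => 0 < x) (reading_word W).
  by rewrite reading_word_map all_map; apply/allP => x /Zm_range /=; lia.
exists W; last by rewrite /embed shiftW eq_Z.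
split; first by rewrite -(shift_shape d) shiftW -le_XZm.1 shift_shape.
rewrite -(ssyt_shift N d W_pos) shiftW; apply: (ssyt_rebound (N := n)).
  by move: ssyt_Z; rewrite eq_Z => /ssyt_cat [_ /ssyt_cat []].
by apply/allP => x /Zm_range; lia.
Qed.

Lemma embed_iso_onto_interval mu : sorted geq mu -> size mu <= N.+1 ->
  iso_onto_interval (is_ssyt N mu) (Ble N) (is_ssyt n (map size top ++ mu ++ map size bot))
    (Ble n) (embed (lowest mu)) (embed (highest N mu)) embed.
Proof.
move=> mu_sorted mu_le.
have shape_l : map size (lowest mu) = mu by apply: const_rows_shape.
have shape_h : map size (highest N mu) = mu by apply: highest_shape.
have ssyt_l := lowest_ssyt mu_le; have ssyt_h := highest_ssyt mu_le.
have image X : is_ssyt N mu X -> is_ssyt n (map size top ++ mu ++ map size bot) (embed X).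
  case/is_ssytE=> shape_X ssyt_X; apply/is_ssytE.
  by rewrite embed_ssyt // !map_cat shift_shape shape_X.
have between X : is_ssyt N mu X ->
    Ble n (embed (lowest mu)) (embed X) /\ Ble n (embed X) (embed (highest N mu)).
  case/is_ssytE=> shape_X ssyt_X; rewrite -shape_X in mu_sorted *.
  by split; apply: Ble_embed; [apply: lowest_Ble | apply: Ble_highest].
have order X Y : is_ssyt N mu X -> is_ssyt N mu Y ->
    Ble N X Y <-> Ble n (embed X) (embed Y).
  move=> /is_ssytE [shape_X ssyt_X] /is_ssytE [shape_Y ssyt_Y].
  by split; [apply: Ble_embed | apply: Ble_embedK; rewrite ?shape_X].
have onto Z : is_ssyt n (map size top ++ mu ++ map size bot) Z ->
    Ble n (embed (lowest mu)) Z -> Ble n Z (embed (highest N mu)) ->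
    exists2 X, is_ssyt N mu X & embed X = Z.
  case/is_ssytE=> _ ssyt_Z /Ble_tab_leq le_lZ /Ble_tab_leq le_Zh.
  have shape_lh : map size (lowest mu) = map size (highest N mu) by rewrite shape_l shape_h.
  have [W [shape_W ssyt_W] eq_Z] := embed_onto ssyt_l ssyt_h shape_lh ssyt_Z le_lZ le_Zh.
  by exists W => //; apply/is_ssytE; rewrite shape_W shape_l.
have lowest_mu : is_ssyt N mu (lowest mu) by apply/is_ssytE.
have highest_mu : is_ssyt N mu (highest N mu) by apply/is_ssytE.
split; first exact: image.
split; first exact: image.
split; first exact: (between _ highest_mu).1.
split; first by move=> X X_mu; split; [apply: image | apply: between].
split; first by move=> X Y _ _; apply: embed_inj.
by split; [exact: onto | exact: order].
Qed.

End Embedding.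

Theorem lemma5p1 (lambda : seq nat) (a b n : nat) :
  is_partition lambda ->
  1 <= a -> a <= b -> b <= size lambda ->
  size lambda <= n ->
  let l := size lambda in
  let mu := drop a.-1 (take b lambda) in
  let m := b - a + 1 in
  (exists (S T : tableau) (f : tableau -> tableau),
     B lambda n S /\ B lambda n T /\ Ble n S T /\
     (forall X, B mu (n - l + m) X ->
        B lambda n (f X) /\ Ble n S (f X) /\ Ble n (f X) T) /\
     (forall X Y, B mu (n - l + m) X -> B mu (n - l + m) Y ->
        f X = f Y -> X = Y) /\
     (forall Z, B lambda n Z -> Ble n S Z -> Ble n Z T ->
        exists2 X, B mu (n - l + m) X & f X = Z) /\
     (forall X Y, B mu (n - l + m) X -> B mu (n - l + m) Y ->
        (Ble (n - l + m) X Y <-> Ble n (f X) (f Y))))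
  /\
  (~ is_lattice (B mu (n - l + m)) (Ble (n - l + m)) ->
   ~ is_lattice (B lambda n) (Ble n)).
Proof.
move=> /andP [lambda_sorted _] a_gt0 le_ab le_bl le_ln l mu m.
set N := n - l + m; set d := a.-1.
set top := lowest (take d lambda).
(* Row k of lambda (counted from 0) gets n + 2 - l + k, the largest entry a
   column of height l can have there. *)
set bot := const_rows (drop b lambda) (fun r => n + b + r + 2 - l).
have shape : map size top ++ mu ++ map size bot = lambda.
  by rewrite !const_rows_shape catA -{1}(take_takel _ (_ : d <= b)) ?cat_take_drop //; lia.
have top_small : all (fun x => x <= d) (reading_word top).
  by apply/allP => x /mem_const_rows [r]; rewrite size_take_min; lia.
have bot_large : all (fun x => N.+1 + d < x) (reading_word bot).
  by apply/allP => x /mem_const_rows [r]; rewrite size_drop /N /m /d /l; lia.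
have ssyt_top : ssyt n top by apply: lowest_ssyt; rewrite size_take_min; lia.
have ssyt_bot : ssyt n bot by apply: const_rows_ssyt => r; rewrite size_drop /l; lia.
have mu_sorted : sorted geq mu by apply/drop_sorted/take_sorted.
have size_mu : size mu <= N.+1 by rewrite size_drop size_take_min /N /m /l; lia.
have le_Nd_n : N + d <= n by rewrite /N /m /d /l; lia.
have := embed_iso_onto_interval top_small bot_large ssyt_top ssyt_bot le_Nd_n mu_sorted size_mu.
rewrite shape => iso; split; first by do 3 eexists; exact: iso.
by move=> not_lattice /(iso_onto_interval_lattice iso (@rt_trans _ _)).
Qed.
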